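(* Let $n\ge 0$ and let $\delta_B$ be any perfect matching of $\{0,1,\ldots,2n+1\}$. Then the configuration $\delta_B\cup\delta_G$ equals the breakpoint graph $BG(\pi)$ of some signed permutation $\pi$ of $\{1,\dots,n\}$ if and only if the complement configuration $\delta_B\cup\overline{\delta_G}$ is hamiltonian (contains a cycle visiting each of the $2n+2$ vertices exactly once).
   Context: $\delta_G=\{\{2i,2i+1\}:0\le i\le n\}$ and $\overline{\delta_G}=\{\{2i-1,2i\}:1\le i\le n\}\cup\{\{0,2n+1\}\}$; a configuration is a multigraph on $\{0,\dots,2n+1\}$ that is the union of a perfect matching $\delta_B$ with $\delta_G$, and its complement replaces $\delta_G$ by $\overline{\delta_G}$. The breakpoint graph: for a signed permutation $\pi$ of $\{1,\dots,n\}$, let $\pi'$ be the unsigned permutation of $\{1,\dots,2n\}$ obtained by replacing each $\pi_i>0$ by $(2\pi_i-1,2\pi_i)$ and each $\pi_i<0$ by $(2|\pi_i|,2|\pi_i|-1)$, with $\pi'_0=0$, $\pi'_{2n+1}=2n+1$; $BG(\pi)$ is the multigraph on $\{0,\dots,2n+1\}$ with black edges $\{\{\pi'_{2i},\pi'_{2i+1}\}:0\le i\le n\}$ and grey edges $\delta_G$. *)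

From HB Require Import structures.
From mathcomp Require Import all_boot all_order all_algebra.
Set Implicit Arguments. Unset Strict Implicit. Unset Printing Implicit Defensive.
Import GRing.Theory Num.Theory.

(* Vertex set {0, ..., 2n+1} is 'I_(2n+2) = 'I_(n.*2.+2).
   Edges are 2-element subsets; a (multi)graph on V is given by its edge
   multiplicity function {ffun {set V} -> nat}. *)
Notation V n := ('I_(n.*2.+2)).

Definition edge (n : nat) (a b : nat) : {set V n} := [set inord a; inord b].

Definition deltaG (n : nat) : {set {set V n}} :=
  [set edge n (2 * i) (2 * i + 1) | i : 'I_n.+1].

(* complement: {{2i-1,2i} : 1 <= i <= n} u {{0,2n+1}} ; indexing i = j+1, j < n *)
Definition deltaGbar (n : nat) : {set {set V n}} :=
  [set edge n (2 * j + 1) (2 * j + 2) | j : 'I_n] :|: [set edge n 0 (2 * n + 1)].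

Definition perfect_matching (n : nat) (M : {set {set V n}}) : Prop :=
  (forall e, e \in M -> #|e| = 2) /\
  (forall v : V n, #|[set e in M | v \in e]| = 1).

Definition union_mg (n : nat) (A B : {set {set V n}}) : {ffun {set V n} -> nat} :=
  [ffun e => ((e \in A) : nat) + ((e \in B) : nat)].

Definition configuration (n : nat) (dB : {set {set V n}}) := union_mg dB (deltaG n).
Definition complement_configuration (n : nat) (dB : {set {set V n}}) :=
  union_mg dB (deltaGbar n).

Definition signed_perm (n : nat) (pi : seq int) : Prop :=
  perm_eq (map absz pi) (iota 1 n) /\ all (fun x => x != 0%R) pi.

Definition pi' (n : nat) (pi : seq int) : seq nat :=
  0 :: flatten [seq if (0 < x)%R then [:: 2 * absz x - 1; 2 * absz x]
                     else [:: 2 * absz x; 2 * absz x - 1] | x <- pi]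
    ++ [:: 2 * n + 1].

Definition black_edges (n : nat) (pi : seq int) : {set {set V n}} :=
  [set edge n (nth 0 (pi' n pi) (2 * i)) (nth 0 (pi' n pi) (2 * i + 1)) | i : 'I_n.+1].

Definition BG (n : nat) (pi : seq int) : {ffun {set V n} -> nat} :=
  union_mg (black_edges n pi) (deltaG n).

(* Hamiltonian multigraph: a cyclic ordering s of all vertices such that the
   consecutive pairs (s_k, s_{k+1 mod |V|}) form a sub-multiset of the edges. *)
Definition hamiltonian (T : finType) (G : {ffun {set T} -> nat}) : Prop :=
  exists s : seq T, perm_eq s (enum T) /\
    forall e : {set T},
      count (fun p : T * T => [set p.1; p.2] == e) (zip s (rot 1 s)) <= G e.

From mathcomp Require Import all_boot all_order all_algebra zify.
Set Implicit Arguments. Unset Strict Implicit. Unset Printing Implicit Defensive.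
Import GRing.Theory Num.Theory.

(* Both delta_B and the complementary grey edges delta_Gbar are perfect
   matchings of the 2n+2 vertices.  In a hamiltonian cycle of the multigraph
   delta_B u delta_Gbar (with n >= 1, hence at least four vertices) two
   consecutive edges are distinct and share a vertex, so they cannot lie in
   the same matching: the cycle alternates between delta_B and delta_Gbar.
   - If delta_B is the set of black edges of pi, the sequence pi' itself is a
     hamiltonian cycle: its edges pi'_(2i) pi'_(2i+1) are black, and the edges
     pi'_(2i+1) pi'_(2i+2), together with the closing edge {2n+1, 0}, are the
     grey-bar edges {2j+1, 2j+2} and {0, 2n+1}.
   - Conversely, a hamiltonian cycle can be rotated and reflected so that it
     starts at 0 and ends at 2n+1 (the delta_Gbar-edge at 0 is {0, 2n+1}).  By
     alternation its odd edges are then grey-bar edges {2j+1, 2j+2}, traversed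
     in one of the two directions; this orientation is the sign of the j+1-th
     entry of a signed permutation pi with pi' = the cycle, whose black edges
     are the even cycle edges; these cover every vertex, hence exhaust the
     perfect matching delta_B. *)

Definition cnext (N k : nat) : nat := if k.+1 < N then k.+1 else 0.

Lemma cnext_lt N k : k < N -> cnext N k < N.
Proof. by rewrite /cnext; case: ifP => //; lia. Qed.

Definition adj (T : finType) (C : {set {set T}}) : rel T := fun x y => [set x; y] \in C.

Definition is_matching (T : finType) (A : {set {set T}}) : Prop :=
  forall e f v, e \in A -> f \in A -> v \in e -> v \in f -> e = f.

Lemma set2_eq (T : finType) (a b x y : T) :
  [set a; b] = [set x; y] -> (a = x /\ b = y) \/ (a = y /\ b = x).
Proof.
move=> E.
have /set2P ha : a \in [set x; y] by rewrite -E set21.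
have /set2P hb : b \in [set x; y] by rewrite -E set22.
have /set2P hx : x \in [set a; b] by rewrite E set21.
have /set2P hy : y \in [set a; b] by rewrite E set22.
by clear E; intuition subst; auto.
Qed.

Section CyclicSequences.
Variables (T : finType) (x0 : T).
Implicit Types (s t : seq T) (C : {set {set T}}).

Definition cyc_edge s k : {set T} := [set nth x0 s k; nth x0 s (cnext (size s) k)].

Lemma cycle_edgesP C s :
  reflect (forall k, k < size s -> cyc_edge s k \in C) (cycle (adj C) s).
Proof.
case: s => [|x p]; first by left.
have stepE : forall k, k < size (x :: p) ->
  adj C (nth x0 (x :: rcons p x) k) (nth x0 (rcons p x) k) = (cyc_edge (x :: p) k \in C).
  move=> k hk; rewrite /adj /cyc_edge /cnext nth_rcons.
  case: k hk => [|k] /=; rewrite ?nth_rcons ltnS => hk.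
    by case: p hk => [|y p].
  by rewrite hk ltnS; case: (ltngtP k.+1 (size p)) => // h; lia.
apply: (iffP (pathP x0)) => hP k; rewrite ?size_rcons => hk.
  by rewrite -stepE //; apply: hP; rewrite size_rcons.
by rewrite stepE //; apply: hP.
Qed.

Lemma cyc_edges_zip s :
  [seq [set p.1; p.2] | p <- zip s (rot 1 s)] = map (cyc_edge s) (iota 0 (size s)).
Proof.
case: s => [|x p] //; rewrite rot1_cons.
apply: (@eq_from_nth _ set0); first by rewrite !size_map size_zip size_rcons minnn size_iota.
rewrite size_map size_zip size_rcons minnn => k hk.
rewrite (nth_map (x0, x0)) ?size_zip ?size_rcons ?minnn // (nth_map 0) ?size_iota //.
rewrite nth_iota // nth_zip ?size_rcons // nth_rcons /cyc_edge /cnext add0n.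
case: k hk => [|k]; rewrite ltnS => hk; first by case: p hk.
have {}hk : k < size p := hk.
by rewrite ltnS; case: (ltngtP k.+1 (size p)) => // h; lia.
Qed.

Lemma nth_inj s a b : uniq s -> a < size s -> b < size s ->
  nth x0 s a = nth x0 s b -> a = b.
Proof. by move=> us ha hb /eqP; rewrite nth_uniq // => /eqP. Qed.

Lemma cyc_edge_inj s k l : uniq s -> 2 < size s -> k < size s -> l < size s ->
  cyc_edge s k = cyc_edge s l -> k = l.
Proof.
move=> us s3 hk hl /set2_eq [[/nth_inj Ek _] | [/nth_inj Ek /nth_inj El]].
  exact: Ek.
have {Ek} Ek := Ek us hk (cnext_lt hl); have {El} El := El us (cnext_lt hk) hl.
by move: Ek El; rewrite /cnext; case: (ltnP l.+1 (size s)); case: (ltnP k.+1 (size s)); lia.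
Qed.

Lemma nth_rot s m i : m <= size s -> i < size s ->
  nth x0 (rot m s) i = nth x0 s (if m + i < size s then m + i else m + i - size s).
Proof.
move=> hm hi; rewrite /rot nth_cat size_drop.
case: ltnP => h1; case: ltnP => h2; try lia.
  by rewrite nth_drop.
by rewrite nth_take; [congr nth | ]; lia.
Qed.

Lemma adj_sym C : symmetric (adj C).
Proof. by move=> x y; rewrite /adj setUC. Qed.

Lemma orient_cycle C s k x y : cycle (adj C) s -> k < size s ->
  cyc_edge s k = [set x; y] ->
  exists t, [/\ perm_eq t s, cycle (adj C) t, nth x0 t 0 = x & nth x0 t (size t).-1 = y].
Proof.
move=> cs hk /set2_eq Exy.
pose r := rot k.+1 s.
have sr : size r = size s by rewrite size_rot.
have cr : cycle (adj C) r by rewrite rot_cycle.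
have r0 : nth x0 r 0 = nth x0 s (cnext (size s) k).
  by rewrite nth_rot ?addn0 /cnext; try lia; congr nth; case: ltnP; lia.
have rN : nth x0 r (size r).-1 = nth x0 s k.
  by rewrite sr nth_rot; try lia; congr nth; case: ltnP; lia.
case: Exy => [[Ex Ey] | [Ey Ex]].
  exists (rev r); split.
  - by rewrite perm_rev perm_rot.
  - by rewrite rev_cycle (eq_cycle (fun z w => adj_sym C w z)).
  - by rewrite nth_rev ?subn1 ?rN ?sr //; lia.
  by rewrite size_rev nth_rev ?prednK ?subnn ?r0 ?sr //; lia.
by exists r; split; rewrite ?perm_rot ?r0 ?rN.
Qed.

End CyclicSequences.

(* With at least three vertices, a multigraph is hamiltonian iff some
   enumeration of the vertices is a cycle in the support of the multigraph:
   the edges of such a cycle are distinct, so multiplicities are irrelevant. *)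
Lemma hamiltonianP (T : finType) (G : {ffun {set T} -> nat}) : 2 < #|T| ->
  hamiltonian G <-> exists s, perm_eq s (enum T) /\ cycle (adj [set e | 0 < G e]) s.
Proof.
move=> T3; have /card_gt0P [x0 _] : 0 < #|T| by lia.
suff key : forall s, perm_eq s (enum T) ->
    (forall e, count (fun p : T * T => [set p.1; p.2] == e) (zip s (rot 1 s)) <= G e)
    <-> cycle (adj [set e | 0 < G e]) s.
  by split=> -[s [ps hs]]; exists s; split => //; apply/(key s ps).
move=> s ps; have us : uniq s by rewrite (perm_uniq ps) enum_uniq.
have s3 : 2 < size s by rewrite (perm_size ps) -cardE.
have cE e : count (fun p : T * T => [set p.1; p.2] == e) (zip s (rot 1 s)) =
    (e \in map (cyc_edge x0 s) (iota 0 (size s))).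
  rewrite -(cyc_edges_zip x0) -count_uniq_mem ?count_map // (cyc_edges_zip x0).
  rewrite map_inj_in_uniq ?iota_uniq //.
  by move=> k l; rewrite !mem_iota => /andP[_ hk] /andP[_ hl]; apply: cyc_edge_inj.
split=> [hc | /(cycle_edgesP x0) hc e].
  apply/(cycle_edgesP x0) => k hk; rewrite inE; have := hc (cyc_edge x0 s k).
  by rewrite cE map_f // mem_iota.
rewrite cE; case: mapP => // -[k]; rewrite mem_iota => /andP[_ hk] ->.
by have := hc k hk; rewrite inE.
Qed.

Section AlternatingCycles.
Variables (T : finType) (x0 : T) (A B : {set {set T}}).
Hypotheses (matchA : is_matching A) (matchB : is_matching B).

Lemma adjacent_edges_alternate e f v : e \in A :|: B -> f \in A :|: B ->
  v \in e -> v \in f -> e != f ->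
  (e \in B) = ~~ (e \in A) /\ (f \in A) = ~~ (e \in A).
Proof.
rewrite !inE => he hf ve vf /eqP nef.
case eA: (e \in A); case eB: (e \in B); case fA: (f \in A); case fB: (f \in B);
  rewrite ?eA ?eB ?fA ?fB // in he hf *; case: nef.
all: by [apply: (matchA _ _ ve vf) | apply: (matchB _ _ ve vf)].
Qed.

Variable s : seq T.
Hypotheses (us : uniq s) (s3 : 2 < size s) (cs : cycle (adj (A :|: B)) s).
Local Notation N := (size s).
Local Notation e := (cyc_edge x0 s).

Lemma alternating_step k : k < N ->
  (e k \in B) = ~~ (e k \in A) /\ (e (cnext N k) \in A) = ~~ (e k \in A).
Proof.
move=> hk; have hk' := cnext_lt hk.
apply: (adjacent_edges_alternate (v := nth x0 s (cnext N k))).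
- exact: (cycle_edgesP _ _ _ cs).
- exact: (cycle_edgesP _ _ _ cs).
- by rewrite !inE eqxx orbT.
- by rewrite !inE eqxx.
apply/eqP => /(cyc_edge_inj us s3 hk hk'); rewrite /cnext; case: ltnP; lia.
Qed.

Lemma alternating_parity k : k < N -> (e k \in A) = (e 0 \in A) (+) odd k.
Proof.
elim: k => [|k IH] hk; first by rewrite addbF.
have [_ E] := alternating_step (ltnW hk).
by rewrite /cnext hk in E; rewrite E IH ?(ltnW hk) // addbN.
Qed.

Lemma vertex_on_edge x : x \in s -> exists2 k, k < N & x \in e k /\ e k \in B.
Proof.
move=> xs; set m := index x s; have hm : m < N by rewrite index_mem.
pose p := if m is m'.+1 then m' else N.-1.
have hp : p < N by rewrite /p; case: (m) hm; lia.
have pm : cnext N p = m by rewrite /p /cnext; case: (m) hm => [|m'] hm'; case: ltnP; lia.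
have [Bm _] := alternating_step hm; have [Bp Ap] := alternating_step hp.
rewrite pm in Ap.
have xm : x \in e m by rewrite /cyc_edge nth_index ?set21.
have xp : x \in e p by rewrite /cyc_edge pm nth_index ?set22.
case eB : (e m \in B); first by exists m.
by exists p => //; rewrite Bp -Ap -[e m \in A]negbK -Bm eB.
Qed.

End AlternatingCycles.

Section Graphs.
Variable n : nat.
Implicit Types (M S : {set {set V n}}) (v : V n).

Lemma perfect_is_matching M : perfect_matching M -> is_matching M.
Proof.
move=> [_ hv] e f v eM fM ve vf.
have /cards1P [g Eg] : #|[set e in M | v \in e]| == 1 by rewrite hv.
have : e \in [set e in M | v \in e] by rewrite inE eM ve.
have : f \in [set e in M | v \in e] by rewrite inE fM vf.
by rewrite Eg !inE => /eqP -> /eqP ->.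
Qed.

Lemma perfect_matching_eq M S : perfect_matching M -> S \subset M ->
  (forall v, exists2 e, e \in S & v \in e) -> S = M.
Proof.
move=> pm sSM cover; apply/eqP; rewrite eqEsubset sSM; apply/subsetP => e eM.
have /set0Pn [v ve] : e != set0 by rewrite -card_gt0 pm.1.
have [f fS vf] := cover v.
by rewrite (perfect_is_matching pm eM (subsetP sSM f fS) ve vf).
Qed.

Lemma edge_mem v a b : a < n.*2.+2 -> b < n.*2.+2 ->
  (v \in edge n a b) = (val v == a) || (val v == b).
Proof. by move=> ha hb; rewrite !inE -!val_eqE /= !inordK. Qed.

Lemma edge_val (x y : V n) : edge n x y = [set x; y].
Proof. by rewrite /edge !inord_val. Qed.

Lemma map_inord_val (t : seq (V n)) : map (@inord n.*2.+1) (map val t) = t.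
Proof. by rewrite -map_comp (eq_map (@inord_val _)) map_id. Qed.

Lemma perm_inord l :
  perm_eq l (iota 0 n.*2.+2) -> perm_eq (map (@inord n.*2.+1) l) (enum (V n)).
Proof. by move=> pl; rewrite -(map_inord_val (enum (V n))) val_enum_ord perm_map. Qed.

Lemma cyc_edge_inord l k : k < size l ->
  cyc_edge ord0 (map (@inord n.*2.+1) l) k = edge n (nth 0 l k) (nth 0 l (cnext (size l) k)).
Proof. by move=> hk; rewrite /cyc_edge size_map !(nth_map 0) ?cnext_lt. Qed.

Lemma edgeC a b : edge n a b = edge n b a.
Proof. exact: setUC. Qed.

(* The neighbour of vertex k in delta_Gbar: 0 <-> 2n+1 and 2j+1 <-> 2j+2. *)
Definition gpartner (k : nat) : nat :=
  if k == 0 then n.*2.+1 else if k == n.*2.+1 then 0 else if odd k then k.+1 else k.-1.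

Lemma gpartner_lt k : k < n.*2.+2 -> gpartner k < n.*2.+2.
Proof.
move=> hk; rewrite /gpartner.
by case: eqVneq => h0; last case: eqVneq => h1; try case: ifP; lia.
Qed.

Lemma gpartner_odd k : odd k -> k < n.*2.+1 -> gpartner k = k.+1.
Proof.
rewrite /gpartner => ok hk; rewrite ifN; last by apply: contraTneq ok => ->.
by rewrite ifN ?ok //; lia.
Qed.

Lemma gpartner_even k : ~~ odd k -> 0 < k -> gpartner k = k.-1.
Proof.
rewrite /gpartner => ek hk; rewrite ifN ?ifN ?(negbTE ek) //; last by rewrite -lt0n.
by apply: contra ek => /eqP ->; rewrite /= odd_double.
Qed.

Lemma deltaGbar_edge e v : e \in deltaGbar n -> v \in e -> e = edge n v (gpartner v).
Proof.
rewrite !inE => /orP[/imsetP[j _ ->] | /eqP ->]; last first.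
  have -> : 2 * n + 1 = n.*2.+1 by lia.
  rewrite edge_mem // => /orP[] /eqP ->; first by [].
  by rewrite /gpartner eqxx edgeC.
have hj := ltn_ord j; rewrite edge_mem; try lia.
case/orP=> /eqP ->.
  rewrite gpartner_odd; [congr (edge n _ _); lia | by rewrite oddD oddM | lia].
rewrite gpartner_even; first by rewrite edgeC; congr (edge n _ _); lia.
  by rewrite oddD oddM.
by rewrite addn2.
Qed.

Lemma deltaGbar_matching : is_matching (deltaGbar n).
Proof. by move=> e f v eG fG ve vf; rewrite (deltaGbar_edge eG ve) (deltaGbar_edge fG vf). Qed.

Definition block (x : int) : seq nat :=
  if (0 < x)%R then [:: 2 * absz x - 1; 2 * absz x] else [:: 2 * absz x; 2 * absz x - 1].

Lemma pi'E pi : pi' n pi = 0 :: flatten (map block pi) ++ [:: 2 * n + 1].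
Proof. by []. Qed.

Lemma block_deltaGbar x : 0 < absz x <= n ->
  edge n (nth 0 (block x) 0) (nth 0 (block x) 1) \in deltaGbar n.
Proof.
move=> hx; have hj : absz x - 1 < n by lia.
have inG : edge n (2 * absz x - 1) (2 * absz x) \in deltaGbar n.
  rewrite inE; apply/orP; left; apply/imsetP; exists (Ordinal hj) => //.
  by congr (edge n _ _) => /=; lia.
by rewrite /block; case: ifP => _ /=; rewrite // edgeC.
Qed.

(* The entry of pi whose block starts with the vertex a (a in 1..2n):
   +(j+1) if a = 2j+1 and -(j+1) if a = 2j+2. *)
Definition signed_block (a : nat) : int :=
  if odd a then Posz (uphalf a) else (- Posz (uphalf a))%R.

Lemma absz_signed_block a : absz (signed_block a) = uphalf a.
Proof. by rewrite /signed_block; case: ifP => _; rewrite ?abszN. Qed.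

Lemma block_signed_block a : 0 < a < n.*2.+1 -> block (signed_block a) = [:: a; gpartner a].
Proof.
move=> ha; have := odd_double_half a; rewrite /block /signed_block uphalf_half.
case oa: (odd a) => /= Ea.
  by rewrite gpartner_odd ?oa //; [congr [:: _; _] | ]; lia.
rewrite oppr_gt0 ltz_nat abszN gpartner_even ?oa //=; last by lia.
by congr [:: _; _]; lia.
Qed.

Lemma uphalf_range a : 0 < a < n.*2.+1 -> 0 < uphalf a <= n.
Proof. by have := odd_double_half a; rewrite uphalf_half; case: (odd a) => /=; lia. Qed.

Lemma uphalf_eq a b : 0 < a < n.*2.+1 -> 0 < b < n.*2.+1 ->
  uphalf a = uphalf b -> b = a \/ b = gpartner a.
Proof.
move=> ha hb; have := odd_double_half a; have := odd_double_half b.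
rewrite !uphalf_half; case oa: (odd a).
  by rewrite gpartner_odd ?oa; last lia; case: (odd b) => /=; lia.
by rewrite gpartner_even ?oa; last lia; case: (odd b) => /=; lia.
Qed.

End Graphs.

Lemma nth_flatten2 (A B : Type) (F : A -> seq B) (l : seq A) i b d x0 :
  (forall x, size (F x) = 2) -> i < size l -> b < 2 ->
  nth d (flatten (map F l)) (2 * i + b) = nth d (F (nth x0 l i)) b.
Proof.
move=> hF; elim: l i => [|x l IH] i //= hi hb.
rewrite nth_cat hF; case: i hi => [|i] hi; first by rewrite muln0 add0n hb.
by rewrite ifN; [rewrite (_ : _ - 2 = 2 * i + b) ?IH //|]; lia.
Qed.

Lemma flatten_pairs_iota m k : 0 < m ->
  flatten [seq [:: 2 * a - 1; 2 * a] | a <- iota m k] = iota (2 * m - 1) (2 * k).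
Proof.
elim: k m => [|k IH] m hm //; rewrite mulnS /= IH; last by lia.
by congr [:: _, _ & _]; [lia | congr iota; lia].
Qed.

Lemma perm_flatten_block (l : seq int) :
  perm_eq (flatten (map block l)) (flatten [seq [:: 2 * a - 1; 2 * a] | a <- map absz l]).
Proof.
elim: l => [|x l IH] //.
rewrite (_ : flatten _ = block x ++ flatten (map block l)) //.
set pairs := fun a : nat => [:: 2 * a - 1; 2 * a].
rewrite (_ : flatten (map pairs (map absz (x :: l)))
           = pairs (absz x) ++ flatten (map pairs (map absz l))) //.
apply: perm_cat IH.
by rewrite /block; case: ifP => _ //; apply/permP => q /=; rewrite addnCA.
Qed.

Section BreakpointCycle.
Variables (n : nat) (pi : seq int).
Hypothesis sp : signed_perm n pi.

Lemma signed_perm_size : size pi = n.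
Proof. by rewrite -(size_map absz) (perm_size sp.1) size_iota. Qed.

Lemma signed_perm_range x : x \in pi -> 0 < absz x <= n.
Proof. by move/(map_f absz); rewrite (perm_mem sp.1) mem_iota; lia. Qed.

Lemma pi'_perm : perm_eq (pi' n pi) (iota 0 n.*2.+2).
Proof.
have pf : perm_eq (flatten (map block pi)) (iota 1 (2 * n)).
  apply: (perm_trans (perm_flatten_block pi)).
  by rewrite -[1]/(2 * 1 - 1) -flatten_pairs_iota //; apply/perm_flatten/perm_map/sp.1.
rewrite pi'E (_ : n.*2.+2 = 1 + 2 * n + 1); last by lia.
rewrite iotaD (iotaD 0 1) /= perm_cons add0n addn1.
by apply: perm_cat.
Qed.

Lemma pi'_size : size (pi' n pi) = n.*2.+2.
Proof. by rewrite (perm_size pi'_perm) size_iota. Qed.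

Lemma flatten_block_size : size (flatten (map block pi)) = 2 * n.
Proof. by have := pi'_size; rewrite pi'E /= size_cat /= addn1; lia. Qed.

Lemma pi'_last : nth 0 (pi' n pi) n.*2.+1 = 2 * n + 1.
Proof. by rewrite pi'E /= nth_cat flatten_block_size -muln2 mulnC ltnn subnn. Qed.

Lemma pi'_block i b : i < n -> b < 2 ->
  nth 0 (pi' n pi) (2 * i + b.+1) = nth 0 (block (nth 0%R pi i)) b.
Proof.
move=> hi hb; rewrite addnS pi'E /= nth_cat flatten_block_size ifT; last by lia.
have size_block x : size (block x) = 2 by rewrite /block; case: ifP.
by rewrite (@nth_flatten2 _ _ block pi i b 0 0%R size_block) ?signed_perm_size.
Qed.

Lemma pi'_odd_edge i : i < n ->
  edge n (nth 0 (pi' n pi) (2 * i + 1)) (nth 0 (pi' n pi) (2 * i + 2)) \in deltaGbar n.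
Proof.
move=> hi; rewrite (pi'_block (b := 0)) ?(pi'_block (b := 1)) //.
by apply/block_deltaGbar/signed_perm_range; rewrite mem_nth ?signed_perm_size.
Qed.

(* pi' lists every vertex once and closes a cycle whose even edges are black
   and whose odd edges, the closing edge {2n+1, 0} included, are grey-bar
   edges. *)
Lemma breakpoint_cycle :
  exists s, perm_eq s (enum (V n)) /\ cycle (adj (black_edges n pi :|: deltaGbar n)) s.
Proof.
exists (map (@inord n.*2.+1) (pi' n pi)); split; first exact/perm_inord/pi'_perm.
apply/(cycle_edgesP ord0) => k; rewrite size_map pi'_size => hk.
rewrite cyc_edge_inord ?pi'_size // inE /cnext.
have := odd_double_half k; set i := k./2; clearbody i; case: (odd k) => /= Ek.
  apply/orP; right; case: ltnP => hk'.
    have -> : k = 2 * i + 1 by lia.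
    by rewrite (_ : (2 * i + 1).+1 = 2 * i + 2) ?pi'_odd_edge //; lia.
  have -> : k = n.*2.+1 by lia.
  by rewrite pi'_last edgeC inE; apply/orP; right; rewrite inE.
apply/orP; left; rewrite ifT; last by lia.
have hi : i < n.+1 by lia.
have -> : k = 2 * i by lia.
by apply/imsetP; exists (Ordinal hi) => //; rewrite addn1.
Qed.

End BreakpointCycle.

Lemma flatten_pairs (f : nat -> nat) j m :
  flatten [seq [:: f (2 * i + 1); f (2 * i + 2)] | i <- iota j m] =
  map f (iota (2 * j + 1) (2 * m)).
Proof.
elim: m j => [|m IH] j //; rewrite mulnS add2n /= IH.
by congr [:: f _, f _ & map f (iota _ _)]; lia.
Qed.

Section NormalCycle.
Variables (n : nat) (dB : {set {set V n}}) (t : seq (V n)).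
Hypotheses (n_gt0 : 0 < n) (pm : perfect_matching dB) (pt : perm_eq t (enum (V n)))
  (ct : cycle (adj (dB :|: deltaGbar n)) t)
  (t_first : nth ord0 t 0 = ord0) (t_last : nth ord0 t n.*2.+1 = ord_max).

Local Notation N := n.*2.+2.
Local Notation e := (cyc_edge ord0 t).
Local Notation h k := (val (nth ord0 t k)).

Let ut : uniq t. Proof. by rewrite (perm_uniq pt) enum_uniq. Qed.
Let st : size t = N. Proof. by rewrite (perm_size pt) size_enum_ord. Qed.

Let h_inj a b : a < N -> b < N -> h a = h b -> a = b.
Proof. by move=> ha hb /val_inj; apply: nth_inj; rewrite ?st. Qed.

Lemma normal_cycle_parity k : k < N ->
  (e k \in dB) = ~~ odd k /\ (e k \in deltaGbar n) = odd k.
Proof.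
have s3 : 2 < size t by rewrite st; lia.
have alt := alternating_step ord0 (perfect_is_matching pm) (@deltaGbar_matching n) ut s3 ct.
have par := alternating_parity ord0 (perfect_is_matching pm) (@deltaGbar_matching n) ut s3 ct.
have hN : n.*2.+1 < size t by rewrite st.
have eN : e n.*2.+1 \in deltaGbar n.
  rewrite /cyc_edge /cnext st ltnn t_first t_last -edge_val inE; apply/orP; right.
  by rewrite inE edgeC; apply/eqP; congr (edge n _ _) => /=; lia.
have [eNB _] := alt _ hN; rewrite eN in eNB.
have e0 : e 0 \in dB.
  have := par _ hN; rewrite (negbTE (esym eNB)) /= odd_double addbT.
  by move/esym/negbFE.
move=> hk; have hk' : k < size t by rewrite st.
have [-> _] := alt _ hk'; rewrite par // e0.
by case: (odd k).
Qed.

Lemma normal_cycle_odd i : i < n ->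
  0 < h (2 * i + 1) < n.*2.+1 /\ h (2 * i + 2) = gpartner n (h (2 * i + 1)).
Proof.
move=> hi; have hk1 : 2 * i + 1 < N by lia.
have hk2 : 2 * i + 2 < N by lia.
have [_ eG] := normal_cycle_parity hk1; rewrite oddD oddM /= in eG.
have e1 : e (2 * i + 1) = [set nth ord0 t (2 * i + 1); nth ord0 t (2 * i + 2)].
  by rewrite /cyc_edge /cnext st ifT (_ : (2 * i + 1).+1 = 2 * i + 2) //; lia.
have := set22 (nth ord0 t (2 * i + 1)) (nth ord0 t (2 * i + 2)).
rewrite -e1 (deltaGbar_edge eG (set21 _ _)) edge_mem ?gpartner_lt //.
case/orP=> /eqP E; first by have := h_inj hk2 hk1 E; lia.
have h0 : h (2 * i + 1) != h 0.
  by apply/negP => /eqP /(h_inj hk1 (ltn0Sn _)); lia.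
have hN : h (2 * i + 1) != h n.*2.+1.
  by apply/negP => /eqP /(h_inj hk1 (ltnSn _)); lia.
rewrite t_first t_last /= in h0 hN.
by split=> //; case: (nth ord0 t (2 * i + 1)) h0 hN => a ha /= h0 hN; lia.
Qed.

(* The signed permutation read off the orientations of the odd edges. *)
Definition normal_pi : seq int := [seq signed_block (h (2 * i + 1)) | i <- iota 0 n].

Lemma normal_pi'E : pi' n normal_pi = map val t.
Proof.
have blocks : map block normal_pi = [seq [:: h (2 * i + 1); h (2 * i + 2)] | i <- iota 0 n].
  rewrite -map_comp; apply/eq_in_map => i; rewrite mem_iota => /andP[_ hi] /=.
  by have [ha ->] := normal_cycle_odd hi; rewrite (block_signed_block ha).
rewrite pi'E blocks (flatten_pairs (fun k => h k)) muln0 add0n.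
rewrite -{2}(mkseq_nth ord0 t) st /mkseq -map_comp.
have -> : iota 0 n.*2.+2 = 0 :: iota 1 (2 * n) ++ [:: n.*2.+1].
  by rewrite (_ : n.*2.+2 = 1 + (2 * n + 1)) ?iotaD //=; [congr (_ :: _ ++ [:: _]) | ]; lia.
by rewrite /= map_cat /= t_first t_last /=; congr (_ :: _ ++ [:: _]); lia.
Qed.

(* The block indices of the n odd edges are distinct and lie in 1..n, so
   normal_pi is a signed permutation. *)
Lemma normal_pi_signed_perm : signed_perm n normal_pi.
Proof.
have absE : map absz normal_pi = [seq uphalf (h (2 * i + 1)) | i <- iota 0 n].
  by rewrite -map_comp; apply/eq_map => i /=; rewrite absz_signed_block.
have range i : i \in iota 0 n -> 0 < uphalf (h (2 * i + 1)) <= n.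
  by rewrite mem_iota => /andP[_ /normal_cycle_odd [/uphalf_range]].
split.
  have uabs : uniq (map absz normal_pi).
    rewrite absE map_inj_in_uniq ?iota_uniq // => a b; rewrite !mem_iota /= => ia ib E.
    have [[ha Ea] [hb _]] := (normal_cycle_odd ia, normal_cycle_odd ib).
    have [a1 a2 b1] : [/\ 2 * a + 1 < N, 2 * a + 2 < N & 2 * b + 1 < N] by split; lia.
    case: (uphalf_eq ha hb E) => [E'|]; first by have := h_inj b1 a1 E'; lia.
    by rewrite -Ea => E'; have := h_inj b1 a2 E'; lia.
  have sub : {subset map absz normal_pi <= iota 1 n}.
    by move=> x; rewrite absE => /mapP [i /range hi ->]; rewrite mem_iota; lia.
  have le_size : size (iota 1 n) <= size (map absz normal_pi).
    by rewrite absE !size_map !size_iota.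
  have [_ me] := uniq_min_size uabs sub le_size.
  by apply: uniq_perm; rewrite ?iota_uniq.
apply/allP => x /mapP [i /range]; rewrite -absz_signed_block => hi ->.
by apply: contraTneq hi => ->.
Qed.

(* The black edges of normal_pi are the even cycle edges: they lie in delta_B
   and cover every vertex, hence form all of delta_B. *)
Lemma normal_black_edges : black_edges n normal_pi = dB.
Proof.
have -> : black_edges n normal_pi = [set e (2 * i) | i : 'I_n.+1].
  apply: eq_imset => i; have hi := ltn_ord i.
  rewrite normal_pi'E -{3}(map_inord_val t) cyc_edge_inord size_map st; last by lia.
  by rewrite /cnext ifT ?addn1 //; lia.
apply: perfect_matching_eq => //.
  apply/subsetP => _ /imsetP [i _ ->].
  have hi : 2 * i < N by have := ltn_ord i; lia.
  by have [-> _] := normal_cycle_parity hi; rewrite oddM.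
move=> v; have vt : v \in t by rewrite (perm_mem pt) mem_enum.
set m := index v t; have hm : m < N by rewrite -st index_mem.
have hi : m./2 < n.+1 by lia.
exists (e (2 * Ordinal hi)); first by apply/imsetP; exists (Ordinal hi).
rewrite /cyc_edge /= /cnext st ifT; last by lia.
rewrite -(nth_index ord0 vt) -/m.
have [Em | Em] : m = 2 * m./2 \/ m = (2 * m./2).+1.
  by have := odd_double_half m; case: (odd m) => /=; lia.
- by rewrite {1}Em set21.
- by rewrite {1}Em set22.
Qed.

Lemma normal_cycle_breakpoint : exists pi, signed_perm n pi /\ dB = black_edges n pi.
Proof.
by exists normal_pi; rewrite normal_black_edges; split=> //; apply: normal_pi_signed_perm.
Qed.

End NormalCycle.

Lemma normalize_cycle n (dB : {set {set V n}}) s : 0 < n -> perfect_matching dB ->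
  perm_eq s (enum (V n)) -> cycle (adj (dB :|: deltaGbar n)) s ->
  exists t, [/\ perm_eq t (enum (V n)), cycle (adj (dB :|: deltaGbar n)) t,
                nth ord0 t 0 = ord0 & nth ord0 t n.*2.+1 = ord_max].
Proof.
move=> n_gt0 pm ps cs.
have us : uniq s by rewrite (perm_uniq ps) enum_uniq.
have ss : size s = n.*2.+2 by rewrite (perm_size ps) size_enum_ord.
have s3 : 2 < size s by rewrite ss; lia.
have s0 : ord0 \in s by rewrite (perm_mem ps) mem_enum.
have [k hk [ek kG]] :=
  vertex_on_edge ord0 (perfect_is_matching pm) (@deltaGbar_matching n) us s3 cs s0.
have Ek : cyc_edge ord0 s k = [set ord0; ord_max].
  by rewrite (deltaGbar_edge kG ek) -edge_val.
have [t [pts ct t0 tN]] := orient_cycle cs hk Ek.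
exists t; split => //; first exact: perm_trans pts ps.
by rewrite (perm_size pts) ss in tN.
Qed.

Lemma configuration_eq n (dB : {set {set V n}}) pi :
  configuration dB = BG n pi <-> dB = black_edges n pi.
Proof.
split=> [E | ->] //; apply/setP => e.
have := congr1 (fun f : {ffun {set V n} -> nat} => f e) E.
rewrite /= !ffunE => /addIn /(congr1 odd).
by case: (e \in dB); case: (e \in black_edges n pi).
Qed.

Lemma complement_support n (dB : {set {set V n}}) :
  [set e | 0 < complement_configuration dB e] = dB :|: deltaGbar n.
Proof.
apply/setP => e; rewrite in_setU in_set /complement_configuration /union_mg ffunE.
by case: (e \in dB); case: (e \in deltaGbar n).
Qed.

Lemma full_edge0 (e : {set V 0}) : #|e| = 2 -> e = setT.
Proof. by move=> he; apply/eqP; rewrite eqEcard subsetT cardsT card_ord he. Qed.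

Lemma matching_n0 (dB : {set {set V 0}}) : perfect_matching dB -> dB = [set setT].
Proof.
move=> pm; apply/setP => e; rewrite inE; apply/idP/eqP => [eB | ->].
  exact: full_edge0 (pm.1 e eB).
have /card_gt0P [f] : 0 < #|[set e in dB | (ord0 : V 0) \in e]| by rewrite pm.2.
by rewrite inE => /andP [fB _]; rewrite -(full_edge0 (pm.1 f fB)).
Qed.

Lemma set_ord0_max_full : [set ord0; ord_max] = [set: V 0].
Proof. by apply: full_edge0; rewrite cards2. Qed.

Lemma black_edges_n0 : black_edges 0 [::] = [set setT].
Proof.
apply/setP => e; rewrite inE; apply/imsetP/eqP => [[i _ ->] | ->]; last first.
  by exists ord0 => //; rewrite -set_ord0_max_full -edge_val.
by rewrite (ord1 i) -set_ord0_max_full -edge_val.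
Qed.

Lemma deltaGbar_n0 : deltaGbar 0 = [set setT].
Proof.
rewrite /deltaGbar.
have -> : [set edge 0 (2 * j + 1) (2 * j + 2) | j : 'I_0] = set0.
  by apply/setP => f; rewrite inE; apply/negbTE/imsetP => -[[]].
by rewrite set0U -set_ord0_max_full -edge_val.
Qed.

(* For n = 0 the complement configuration is the double edge {0, 1}, which is
   a hamiltonian cycle. *)
Lemma hamiltonian_n0 (dB : {set {set V 0}}) :
  perfect_matching dB -> hamiltonian (complement_configuration dB).
Proof.
move=> pm; exists [:: ord0; ord_max]; split.
  apply: uniq_perm => [||x]; rewrite ?enum_uniq //=.
  by rewrite mem_enum !inE -!val_eqE /=; case: x => -[|[|m]] //=; lia.
move=> e; rewrite /complement_configuration /union_mg ffunE (matching_n0 pm) deltaGbar_n0.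
rewrite !inE /=.
by rewrite [[set ord_max; ord0]]setUC set_ord0_max_full addn0 eq_sym.
Qed.

Theorem mainTheorem2 (n : nat) (dB : {set {set 'I_(n.*2.+2)}}) :
  perfect_matching dB ->
  ((exists pi : seq int, signed_perm n pi /\ configuration dB = BG n pi) <->
   hamiltonian (complement_configuration dB)).
Proof.
move=> pm; case: (posnP n) => [n0 | n_gt0].
  subst n; split=> _; first exact: hamiltonian_n0.
  exists [::]; split; first by split.
  by apply/configuration_eq; rewrite black_edges_n0 (matching_n0 pm).
rewrite hamiltonianP ?card_ord ?complement_support; last by lia.
split=> [[pi [sp /configuration_eq ->]] | [s [ps cs]]].
  exact: breakpoint_cycle sp.
have [c [pc cc c0 cN]] := normalize_cycle n_gt0 pm ps cs.
have [pi [sp dB_pi]] := normal_cycle_breakpoint n_gt0 pm pc cc c0 cN.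
by exists pi; split=> //; apply/configuration_eq.
Qed.
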